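(* Let $k\geq 1$ and $n\geq 2$ be integers. Then $C_{k,n}^2-C_{k,n-1}C_{k,n+1}=-8(k-1)^{n}$.
   Context: For an integer $k\geq 1$, the generalized balancing-Lucas numbers are defined by $C_{k,0}=1$, $C_{k,1}=3$ and $C_{k,n}=3kC_{k,n-1}+(1-k)C_{k,n-2}$ for $n\geq 2$. *)

From mathcomp Require Import all_boot all_algebra.
Set Implicit Arguments. Unset Strict Implicit. Unset Printing Implicit Defensive.
Import GRing.Theory.
Local Open Scope ring_scope.

Fixpoint balLucas (k : nat) (n : nat) : int :=
  match n with
  | 0%N => 1
  | 1%N => 3
  | (m.+1 as n1).+1 => 3 * (k%:Z) * balLucas k n1 + (1 - k%:Z) * balLucas k m
  end.

(* A sequence satisfying x_{m+2} = a x_{m+1} + b x_m has Cassini defect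
   x_{m+1}^2 - x_m x_{m+2} equal to (-b)^m times its initial defect.  For the
   balancing-Lucas numbers -b = k - 1 and the initial defect is
   3^2 - 1 * (9k + 1 - k) = -8 (k - 1). *)
From mathcomp Require Import all_boot all_algebra.
From mathcomp Require Import ring.
Set Implicit Arguments. Unset Strict Implicit. Unset Printing Implicit Defensive.
Import GRing.Theory.
Local Open Scope ring_scope.

Section SecondOrderRecurrence.

Variables (R : comPzRingType) (a b : R) (x : nat -> R).
Hypothesis x_rec : forall m, x m.+2 = a * x m.+1 + b * x m.

Lemma cassini_rec (m : nat) :
  x m.+1 ^+ 2 - x m * x m.+2 = (- b) ^+ m * (x 1 ^+ 2 - x 0 * x 2).
Proof.
elim: m => [|m IH]; first by rewrite expr0 mul1r.
by rewrite [(- b) ^+ m.+1]exprS -mulrA -IH !x_rec; ring.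
Qed.

End SecondOrderRecurrence.

Lemma balLucas_rec (k m : nat) :
  balLucas k m.+2 = 3 * k%:Z * balLucas k m.+1 + (1 - k%:Z) * balLucas k m.
Proof. by []. Qed.

Lemma balLucas_cassini0 (k : nat) :
  balLucas k 1 ^+ 2 - balLucas k 0 * balLucas k 2 = - 8 * (k%:Z - 1).
Proof. by rewrite balLucas_rec /=; ring. Qed.

(* The identity holds for every k and every n >= 1. *)
Theorem mainTheorem16 (k n : nat) (hk : (1 <= k)%N) (hn : (2 <= n)%N) :
  balLucas k n ^+ 2 - balLucas k n.-1 * balLucas k n.+1
    = - 8 * (k%:Z - 1) ^+ n.
Proof.
case: n hn => [|m] // _.
rewrite (cassini_rec (balLucas_rec k)) balLucas_cassini0 opprB.
by rewrite mulrCA -exprSr.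
Qed.
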